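(* Let $G$ be a Parametric Timed Game, $R\subseteq L$ a reachability objective, and $W(R)$ the set of winning states of $G$ for $R$. Then $$\mathit{SafePred}\big(W(R)\cup\mathit{WinningMoves}(W(R)),\ \mathit{Uncontrollable}(W(R))\big)\subseteq W(R).$$
   Context: A Parametric Timed Game (PTG) is a tuple $G=(L,X,P,\mathit{Act},T_c,T_u,\ell_0,\mathit{Inv})$ where $L$ is a finite set of locations, $X$ a finite set of clocks, $P$ a finite set of parameters, $\mathit{Act}$ a set of labels, $\ell_0\in L$ the initial location, $T=T_c\cup T_u$ (disjoint union of controllable and uncontrollable transitions) is a finite set of tuples $(\ell,g,a,Y,\ell')$ with $\ell,\ell'\in L$, $a\in\mathit{Act}$, $Y\subseteq X$ and $g$ a guard, and $\mathit{Inv}$ maps each location to a guard. A linear term over $P$ is an expression $k_0+\sum_i k_i p_i$ with $k_i\in\mathbb{Q}$, $p_i\in P$. A guard is a finite conjunction of constraints $x\sim \mathit{plt}$ and $\mathit{plt}'\sim\mathit{plt}$ with $x\in X$, $\sim\in\{<,\le,=,\ge,>\}$, and $\mathit{plt},\mathit{plt}'$ linear terms over $P$. A valuation is a pair $v=(v_X,v_P)$ with $v_X:X\to\mathbb{R}_{\ge0}$ and $v_P:P\to\mathbb{Q}_{\ge0}$; satisfaction $v\models g$ is defined by substituting values. For $\delta\ge0$, $v+\delta=(v_X+\delta,v_P)$ (all clocks increased by $\delta$), and $v[Y:=0]$ sets clocks in $Y$ to $0$ and leaves other clocks and the parameters unchanged. A state is a pair $(\ell,v)$ with $v\models\mathit{Inv}(\ell)$;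 $\mathbb{S}$ is the set of states. Timed transition: for $\delta\in\mathbb{R}_{\ge0}$, $(\ell,v)\to^{\delta}(\ell',v')$ iff both are states, $\ell=\ell'$ and $v'=v+\delta$. Discrete transition: for $t=(\ell,g,a,Y,\ell')\in T$, $(\ell,v)\to^{t}(\ell',v')$ iff both are states, $v\models g$ and $v'=v[Y:=0]$. A run from a state $s_0$ is a finite or infinite sequence $s_0s_1s_2\ldots$ of states with $s_{2i}\to^{\delta_i}s_{2i+1}\to^{t_i}s_{2i+2}$ for some $\delta_i\ge0$, $t_i\in T$ (as long as the sequence continues); a history is a finite prefix of a run, $\mathcal{H}$ the set of histories, and $ls(h)$ the last state of $h$. Coverage: $\mathit{Cover}(s\to^{\delta}s')=\{s''\in\mathbb{S}\mid \exists\,0\le\delta'\le\delta,\ s\to^{\delta'}s''\}$; $\mathit{Cover}(s)=\{s'\mid\exists\delta\ge0,\ s\to^\delta s'\}$; the coverage of a run $r=s_0s_1\ldots$ is the union of $\mathit{Cover}(s_{2i}\to^{\delta}s_{2i+1})$ over its timed transitions, together with $\mathit{Cover}(ls(r))$ if $r$ is finite. For $R\subseteq L$, a run $r$ is winning iff $\mathit{Cover}(r)$ contains a state whose location is in $R$. A controller strategy is a function $\sigma_c:\mathcal{H}\to\mathbb{R}_{\ge0}\cup\{\infty\}\cup T_c$ and an environment strategy a function $\sigma_e:\mathcal{H}\to\mathbb{R}_{\ge0}\cup\{\infty\}\cup T_u$, such that for $\sigma\in\{\sigma_c,\sigma_e\}$ and every $h$: (1) if $\sigma(h)=(\ell,g,a,Y,\ell')\in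 T$ then $ls(h)=(\ell,v)$ with $v\models g$ and $v[Y:=0]\models\mathit{Inv}(\ell')$; (2) if $\sigma(h)=\delta\in\mathbb{R}_{\ge0}$ and $ls(h)\to^{\delta}s$ for some state $s$, then $\sigma(h\to^\delta s)\in T$ (where $h\to^{\delta}s$ is $h$ extended by the delay). The global strategy $\sigma=\sigma_{(\sigma_c,\sigma_e)}$ is: if $\sigma_e(h)=t_u\in T_u$ then $\sigma(h)=t_u$; if $\sigma_c(h)=t_c\in T_c$ and $\sigma_e(h)$ is a delay then $\sigma(h)=t_c$; if both are delays $\delta,\delta'$ then $\sigma(h)=\min(\delta,\delta')$. The run induced by $\sigma$ from $s_0$ is built as follows: at even index $i$, if $\sigma(s_0\ldots s_i)=t\in T$ then $s_{i+1}=s_i$ (delay $0$) and $s_{i+2}$ is the $t$-successor; if it is a delay $\delta$ and a state $s$ with $s_i\to^\delta s$ exists, $s_{i+1}=s$; otherwise the run ends; at odd index $i$, $\sigma(s_0\ldots s_i)$ is a transition $t$ and $s_{i+1}$ is the unique state with $s_i\to^t s_{i+1}$. A run adheres to $\sigma_c$ if it is the run induced by $\sigma_{(\sigma_c,\sigma_e)}$ for some environment strategy $\sigma_e$. A controller strategy is winning from $s$ (for $R$) if all runs from $s$ adhering to it are winning; $s$ is a winning state if such a strategy exists, and $W(R)$ denotes the set of winning states. Operators on sets of states $S,S_1,S_2\subseteq\mathbb{S}$: $\mathit{WinningMoves}(S)=\{s\in\mathbb{S}\mid\exists t\in T_c,\ s'\in S,\ s\to^t s'\}$; $\mathit{Uncontrollable}(S)=\{s\in\mathbb{S}\mid\exists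 t\in T_u,\ s'\notin S,\ s\to^t s'\}$; $\mathit{SafePred}(S_1,S_2)=\{s\in\mathbb{S}\mid \exists s'\in S_1,\ \exists\delta\ge0,\ s\to^\delta s'\ \wedge\ \mathit{Cover}(s\to^\delta s')\cap S_2=\emptyset\}$. *)

From Stdlib Require Import Reals QArith Qreals List.
Set Implicit Arguments.
Unset Strict Implicit.

Inductive cmp := CLt | CLe | CEq | CGe | CGt.

Definition cmpR (c : cmp) (a b : R) : Prop :=
  match c with
  | CLt => (a < b)%R | CLe => (a <= b)%R | CEq => a = b
  | CGe => (a >= b)%R | CGt => (a > b)%R
  end.

(** linear term k0 + sum_i k_i p_i over parameters P, k_i rationals *)
Definition lterm (P : Type) : Type := (Q * list (Q * P))%type.

Inductive atom (X P : Type) : Type :=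
  | AClock : X -> cmp -> lterm P -> atom X P
  | AParam : lterm P -> cmp -> lterm P -> atom X P.

Definition guard (X P : Type) : Type := list (atom X P).

(** transition (l, g, a, Y, l'); the reset set Y ⊆ X is given by its
    characteristic function *)
Definition trans (L X P Act : Type) : Type :=
  (L * guard X P * Act * (X -> bool) * L)%type.

Record PTG (L X P Act : Type) := mkPTG {
  Tc : list (trans L X P Act);
  Tu : list (trans L X P Act);
  l0 : L;
  Inv : L -> guard X P;
  TcTu_disjoint : forall t, In t Tc -> ~ In t Tu;
  L_finite : exists ls : list L, forall l, In l ls;
  X_finite : exists xs : list X, forall x, In x xs;
  P_finite : exists ps : list P, forall p, In p ps
}.

Definition valuation (X P : Type) : Type := ((X -> R) * (P -> Q))%type.

Definition is_val (X P : Type) (v : valuation X P) : Prop :=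
  (forall x, (0 <= fst v x)%R) /\ (forall p, (0 <= snd v p)%Q).

Definition eval_lterm (X P : Type) (v : valuation X P) (t : lterm P) : R :=
  (Q2R (fst t) +
   fold_right (fun kp acc => Q2R (fst kp) * Q2R (snd v (snd kp)) + acc) 0
     (snd t))%R.

Definition sat_atom (X P : Type) (v : valuation X P) (a : atom X P) : Prop :=
  match a with
  | @AClock _ _ x c t => cmpR c (fst v x) (eval_lterm v t)
  | @AParam _ _ t1 c t2 => cmpR c (eval_lterm v t1) (eval_lterm v t2)
  end.

Definition sat (X P : Type) (v : valuation X P) (g : guard X P) : Prop :=
  forall a, In a g -> sat_atom v a.

Definition vshift (X P : Type) (v : valuation X P) (d : R) : valuation X P :=
  (fun x => (fst v x + d)%R, snd v).

Definition vreset (X P : Type) (v : valuation X P) (Y : X -> bool)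
  : valuation X P :=
  (fun x => if Y x then 0%R else fst v x, snd v).

Section Semantics.
Variables L X P Act : Type.
Variable G : PTG L X P Act.

Definition state : Type := (L * valuation X P)%type.
Definition Tr : Type := trans L X P Act.
Definition Tall : list Tr := Tc G ++ Tu G.

Definition tsrc (t : Tr) : L := let '(l, _, _, _, _) := t in l.
Definition tguard (t : Tr) : guard X P := let '(_, g, _, _, _) := t in g.
Definition treset (t : Tr) : X -> bool := let '(_, _, _, Y, _) := t in Y.
Definition tdst (t : Tr) : L := let '(_, _, _, _, l') := t in l'.

Definition is_state (s : state) : Prop :=
  is_val (snd s) /\ sat (snd s) (Inv G (fst s)).

Definition delay_step (d : R) (s s' : state) : Prop :=
  is_state s /\ is_state s' /\ (0 <= d)%R /\
  fst s' = fst s /\ snd s' = vshift (snd s) d.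

Definition disc_step (t : Tr) (s s' : state) : Prop :=
  is_state s /\ is_state s' /\ fst s = tsrc t /\ fst s' = tdst t /\
  sat (snd s) (tguard t) /\ snd s' = vreset (snd s) (treset t).

(** Cover(s ->^d s') (s' only fixes d, which is given explicitly) *)
Definition cover_delay (s : state) (d : R) (s'' : state) : Prop :=
  is_state s'' /\ exists d', (0 <= d')%R /\ (d' <= d)%R /\ delay_step d' s s''.

Definition cover_step (s s' s'' : state) : Prop :=
  exists d, delay_step d s s' /\ cover_delay s d s''.

Definition cover_state (s s' : state) : Prop :=
  exists d, delay_step d s s'.

(** histories: finite (nonempty) prefixes of runs, in chronological order *)
Definition history (h : list state) : Prop :=
  h <> nil /\
  (forall i s, nth_error h i = Some s -> is_state s) /\
  (forall i s s', nth_error h i = Some s -> nth_error h (S i) = Some s' ->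
     (Nat.even i = true -> exists d, delay_step d s s') /\
     (Nat.even i = false -> exists t, In t Tall /\ disc_step t s s')).

Inductive choice : Type :=
  | Delay : R -> choice
  | Infty : choice
  | Trans : Tr -> choice.

Definition strategy : Type := list state -> choice.

Definition valid_strategy (Ts : list Tr) (sg : strategy) : Prop :=
  forall h0 s, history (h0 ++ s :: nil) ->
    (forall t, sg (h0 ++ s :: nil) = Trans t ->
       In t Ts /\ fst s = tsrc t /\ sat (snd s) (tguard t) /\
       sat (vreset (snd s) (treset t)) (Inv G (tdst t))) /\
    (forall d, sg (h0 ++ s :: nil) = Delay d ->
       (0 <= d)%R /\
       forall s', delay_step d s s' ->
         exists t, sg (h0 ++ s :: s' :: nil) = Trans t).

Definition ctrl_strategy (sg : strategy) : Prop := valid_strategy (Tc G) sg.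
Definition env_strategy (sg : strategy) : Prop := valid_strategy (Tu G) sg.

Definition global_choice (c e : choice) : choice :=
  match e with
  | Trans tu => Trans tu
  | _ =>
    match c with
    | Trans tc => Trans tc
    | Delay d => match e with Delay d' => Delay (Rmin d d') | _ => Delay d end
    | Infty => e
    end
  end.

Definition global_strategy (sc se : strategy) : strategy :=
  fun h => global_choice (sc h) (se h).

(** runs: finite (rlen = Some n, n >= 1 states) or infinite (rlen = None) *)
Record run : Type := mkRun { rlen : option nat; rst : nat -> state }.

Definition in_run (r : run) (i : nat) : Prop :=
  match rlen r with None => True | Some n => (i < n)%nat end.

Definition prefix (r : run) (i : nat) : list state :=
  map (rst r) (seq 0 (S i)).

Definition induced (sg : strategy) (s0 : state) (r : run) : Prop :=
  in_run r 0 /\ rst r 0 = s0 /\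
  forall i, Nat.even i = true -> in_run r i ->
    match sg (prefix r i) with
    | Trans t =>
        in_run r (S (S i)) /\ rst r (S i) = rst r i /\
        disc_step t (rst r i) (rst r (S (S i)))
    | Delay d =>
        ((exists s, delay_step d (rst r i) s) ->
           in_run r (S i) /\ delay_step d (rst r i) (rst r (S i)) /\
           match sg (prefix r (S i)) with
           | Trans t => in_run r (S (S i)) /\
                        disc_step t (rst r (S i)) (rst r (S (S i)))
           | _ => ~ in_run r (S (S i))
           end) /\
        ((~ exists s, delay_step d (rst r i) s) -> ~ in_run r (S i))
    | Infty => ~ in_run r (S i)
    end.

Definition adheres (sc : strategy) (s0 : state) (r : run) : Prop :=
  exists se, env_strategy se /\ induced (global_strategy sc se) s0 r.

Definition cover_run (r : run) (s'' : state) : Prop :=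
  (exists i, Nat.even i = true /\ in_run r (S i) /\
             cover_step (rst r i) (rst r (S i)) s'') \/
  (exists n, rlen r = Some n /\ cover_state (rst r (n - 1)) s'').

Definition winning_run (Rg : L -> Prop) (r : run) : Prop :=
  exists s, cover_run r s /\ Rg (fst s).

Definition winning_strategy_from (Rg : L -> Prop) (sc : strategy) (s : state)
  : Prop :=
  ctrl_strategy sc /\ forall r, adheres sc s r -> winning_run Rg r.

Definition Win (Rg : L -> Prop) (s : state) : Prop :=
  is_state s /\ exists sc, winning_strategy_from Rg sc s.

Definition WinningMoves (S : state -> Prop) (s : state) : Prop :=
  is_state s /\ exists t s', In t (Tc G) /\ S s' /\ disc_step t s s'.

Definition Uncontrollable (S : state -> Prop) (s : state) : Prop :=
  is_state s /\ exists t s', In t (Tu G) /\ ~ S s' /\ disc_step t s s'.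

Definition SafePred (S1 S2 : state -> Prop) (s : state) : Prop :=
  is_state s /\ exists s' d, S1 s' /\ delay_step d s s' /\
    forall s'', cover_delay s d s'' -> ~ S2 s''.

End Semantics.

From Pilot Require Import Defs.
From Stdlib Require Import Reals QArith Qreals List.
From Stdlib Require Import Lra Lia Classical ClassicalEpsilon.
From Stdlib Require Import FunctionalExtensionality PropExtensionality.
Import ListNotations.
Open Scope R_scope.

(* Let [s] reach [s'] by a delay [d] such that [s'] is winning or has a controllable
   move into W(R), and no state on the way has an uncontrollable move leaving W(R).
   The controller waits [d] and then plays the winning move, or continues as a
   winning strategy from [s'] would (merging its first delay into [d] when that
   strategy does not move at once).  If the environment interrupts the wait, it
   lands in W(R) by the safety condition and the controller switches to a winning
   strategy of the state reached.  Each such run is a run from [s'] (or from the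
   landing state) with its first state replaced, and replacing [s'] by [s] only
   enlarges the cover. *)

Definition delayed {L X P : Type} (s : state L X P) (a : R) : state L X P :=
  (fst s, vshift (snd s) a).

Lemma delayed_add {L X P} (s : state L X P) a b :
  delayed (delayed s a) b = delayed s (a + b).
Proof.
  unfold delayed, vshift; simpl; do 2 f_equal.
  apply functional_extensionality; intros; ring.
Qed.

Lemma delayed_0 {L X P} (s : state L X P) : delayed s 0 = s.
Proof.
  destruct s as [l [vx vp]]; unfold delayed, vshift; simpl; do 2 f_equal.
  apply functional_extensionality; intros; ring.
Qed.

(* Without clocks every delay yields the same state, so delays cannot be
   recovered from their effect. *)
Lemma delayed_eq_cases {L X P} (s : state L X P) a b :
  delayed s a = delayed s b -> a = b \/ forall c c', delayed s c = delayed s c'.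
Proof.
  destruct s as [l [vx vp]]; unfold delayed, vshift; simpl; intros E.
  destruct (Req_dec a b) as [->|Nab]; [now left|right; intros c c'].
  injection E as E; do 2 f_equal; apply functional_extensionality; intros x.
  exfalso; apply Nab; pose proof (equal_f E x) as Ex; simpl in Ex; lra.
Qed.

Lemma eval_lterm_vshift {X P} (v : valuation X P) a t :
  eval_lterm (vshift v a) t = eval_lterm v t.
Proof. reflexivity. Qed.

Section Delays.
Context {L X P Act : Type} (G : PTG L X P Act).
Implicit Types (s y : state L X P) (a b d : R).

Lemma delay_stepE a s y :
  delay_step G a s y <-> is_state G s /\ is_state G y /\ 0 <= a /\ y = delayed s a.
Proof.
  unfold delay_step, delayed; destruct y as [l v]; simpl; split.
  - intros (H1 & H2 & H3 & -> & ->); tauto.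
  - intros (H1 & H2 & H3 & E); inversion E; subst; tauto.
Qed.

Lemma delay_step_det a s y y' :
  delay_step G a s y -> delay_step G a s y' -> y = y'.
Proof. rewrite !delay_stepE; intros (_&_&_&->) (_&_&_&->); reflexivity. Qed.

Lemma delay_step_trans a b s y z :
  delay_step G a s y -> delay_step G b y z -> delay_step G (a + b) s z.
Proof.
  rewrite !delay_stepE; intros (Hs&_&Ha&->) (_&Hz&Hb&->).
  rewrite <- delayed_add; split; [exact Hs|split; [exact Hz|split; [lra|reflexivity]]].
Qed.

Lemma delay_step_0 s : is_state G s -> delay_step G 0 s s.
Proof.
  intros Hs; apply delay_stepE; rewrite delayed_0.
  split; [exact Hs|split; [exact Hs|split; [lra|reflexivity]]].
Qed.

(* Invariants are conjunctions of constraints [x ~ c] on clocks, hence convex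
   along a delay. *)
Lemma is_state_delayed s a d :
  is_state G s -> is_state G (delayed s d) -> 0 <= a <= d -> is_state G (delayed s a).
Proof.
  destruct s as [l [vx vp]]; unfold is_state, delayed, is_val, sat; simpl.
  intros [[Hv Hp] Hs] [[_ _] Hd] Ha; split.
  - split; [intros x; specialize (Hv x); simpl in *; lra|exact Hp].
  - intros at0 Hin; specialize (Hs at0 Hin); specialize (Hd at0 Hin).
    destruct at0 as [x c t|t1 c t2]; simpl in *; [|exact Hs].
    rewrite !eval_lterm_vshift in *; destruct c; simpl in *; lra.
Qed.

Lemma delay_step_le s s' a d :
  delay_step G d s s' -> 0 <= a <= d -> delay_step G a s (delayed s a).
Proof.
  rewrite delay_stepE; intros (Hs & Hs' & _ & ->) Ha; apply delay_stepE.
  split; [exact Hs|split; [exact (is_state_delayed _ _ _ Hs Hs' Ha)|split; [lra|reflexivity]]].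
Qed.

Lemma delay_step_sub s s' y d D :
  delay_step G d s s' -> delay_step G D s y -> d <= D -> delay_step G (D - d) s' y.
Proof.
  rewrite !delay_stepE; intros (_ & Hs' & _ & ->) (_ & Hy & _ & ->) Hle.
  rewrite delayed_add; split; [exact Hs'|split; [exact Hy|split; [lra|]]].
  do 2 f_equal; ring.
Qed.

Lemma cover_delay_of_step s d D y :
  delay_step G D s y -> D <= d -> cover_delay G s d y.
Proof.
  intros HD Hle; split; [exact (proj1 (proj2 HD))|exists D].
  split; [exact (proj1 (proj2 (proj2 HD)))|split; [exact Hle|exact HD]].
Qed.

Lemma disc_step_det t s y y' :
  disc_step G t s y -> disc_step G t s y' -> y = y'.
Proof.
  intros (_&_&_&H1&_&H2) (_&_&_&H3&_&H4); destruct y, y'; simpl in *; congruence.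
Qed.

End Delays.

Section Histories.
Context {L X P Act : Type} (G : PTG L X P Act).

Lemma history_single x : is_state G x -> history G [x].
Proof.
  intros Hx; split; [discriminate|split].
  - intros [|[|i]] s Hs; simpl in Hs; try discriminate; inversion Hs; subst; exact Hx.
  - intros [|[|i]] s s' Hs Hs'; simpl in *; discriminate.
Qed.

Lemma history_replace_head a b x1 rest :
  history G (a :: x1 :: rest) -> is_state G b -> (exists d, delay_step G d b x1) ->
  history G (b :: x1 :: rest).
Proof.
  intros (_ & Hst & Hstep) Hb Hd; split; [discriminate|split].
  - intros [|i] s Hs; simpl in Hs; [inversion Hs; subst; exact Hb|exact (Hst (S i) s Hs)].
  - intros [|i] s s' Hs Hs'; simpl in Hs, Hs'.
    + inversion Hs; inversion Hs'; subst; split; intros E; [exact Hd|discriminate].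
    + exact (Hstep (S i) s s' Hs Hs').
Qed.

Lemma history_two D a b : delay_step G D a b -> history G [a; b].
Proof.
  intros Hd; pose proof (proj1 (proj2 Hd)) as Hb.
  apply (history_replace_head b); [|exact (proj1 Hd)|now exists D].
  split; [discriminate|split].
  - intros [|[|[|i]]] x Hx; simpl in Hx; try discriminate; inversion Hx; subst; exact Hb.
  - intros [|[|i]] x x' Hx Hx'; simpl in *; try discriminate.
    inversion Hx; inversion Hx'; subst.
    split; intros E; [exists 0; exact (delay_step_0 G _ Hb)|discriminate].
Qed.

Lemma history_prepend_step x0 x1 x2 rest D t :
  history G (x2 :: rest) -> delay_step G D x0 x1 -> In t (Tall G) -> disc_step G t x1 x2 ->
  history G (x0 :: x1 :: x2 :: rest).
Proof.
  intros (_ & Hst & Hstep) Hd Ht Hdisc; split; [discriminate|split].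
  - intros [|[|i]] s Hs; simpl in Hs.
    + inversion Hs; subst; exact (proj1 Hd).
    + inversion Hs; subst; exact (proj1 (proj2 Hd)).
    + exact (Hst i s Hs).
  - intros [|[|i]] s s' Hs Hs'; simpl in Hs, Hs'.
    + inversion Hs; inversion Hs'; subst.
      split; intros E; [exists D; exact Hd|discriminate].
    + inversion Hs; inversion Hs'; subst.
      split; intros E; [discriminate|exists t; split; assumption].
    + exact (Hstep i s s' Hs Hs').
Qed.

Lemma history_three D x0 x1 x2 t :
  delay_step G D x0 x1 -> In t (Tall G) -> disc_step G t x1 x2 -> history G [x0; x1; x2].
Proof.
  intros Hd Ht Hdisc; apply (history_prepend_step x0 x1 x2 [] D t); trivial.
  exact (history_single _ (proj1 (proj2 Hdisc))).
Qed.

Lemma history_three_inv x0 x1 x2 :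
  history G [x0; x1; x2] ->
  (exists D, delay_step G D x0 x1) /\ (exists t, In t (Tall G) /\ disc_step G t x1 x2).
Proof.
  intros (_ & _ & Hs); split.
  - exact (proj1 (Hs 0%nat x0 x1 eq_refl eq_refl) eq_refl).
  - exact (proj2 (Hs 1%nat x1 x2 eq_refl eq_refl) eq_refl).
Qed.

Lemma history_drop_step a b rest :
  history G (a :: b :: rest) -> rest <> [] -> history G rest.
Proof.
  intros (_ & Hst & Hstep) Hr; split; [exact Hr|split].
  - intros i s Hs; exact (Hst (S (S i)) s Hs).
  - intros i s s' Hs Hs'; exact (Hstep (S (S i)) s s' Hs Hs').
Qed.

End Histories.

Lemma In_Tall_u {L X P Act} (G : PTG L X P Act) t : In t (Tu G) -> In t (Tall G).
Proof. intros H; apply in_or_app; now right. Qed.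

Lemma In_Tall_c {L X P Act} (G : PTG L X P Act) t : In t (Tc G) -> In t (Tall G).
Proof. intros H; apply in_or_app; now left. Qed.

Section Strategies.
Context {L X P Act : Type} (G : PTG L X P Act).

Definition valid_at (Ts : list (Tr L X P Act)) (sg : strategy L X P Act)
  (h : list (state L X P)) (y : state L X P) : Prop :=
  (forall t, sg (h ++ [y]) = Trans t ->
     In t Ts /\ fst y = tsrc t /\ sat (snd y) (tguard t) /\
     sat (vreset (snd y) (treset t)) (Inv G (tdst t))) /\
  (forall d, sg (h ++ [y]) = Delay _ _ _ _ d ->
     0 <= d /\ forall y', delay_step G d y y' -> exists t, sg (h ++ [y; y']) = Trans t).

Lemma valid_strategyE Ts sg :
  valid_strategy G Ts sg <-> forall h y, history G (h ++ [y]) -> valid_at Ts sg h y.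
Proof. reflexivity. Qed.

Lemma valid_at_ext Ts sg sg' h h' y :
  (forall l, sg (h ++ y :: l) = sg' (h' ++ y :: l)) ->
  valid_at Ts sg' h' y -> valid_at Ts sg h y.
Proof.
  intros E [HT HD]; split.
  - intros t Ht; rewrite E in Ht; exact (HT t Ht).
  - intros d Hd; rewrite E in Hd; destruct (HD d Hd) as [Hd0 Hd1].
    split; [exact Hd0|intros y' Hy'; rewrite E; exact (Hd1 y' Hy')].
Qed.

Lemma valid_at_Infty Ts sg h y : sg (h ++ [y]) = Infty _ _ _ _ -> valid_at Ts sg h y.
Proof. intros E; split; intros t Ht; rewrite E in Ht; discriminate. Qed.

Lemma global_choice_Infty_l c : global_choice (Infty L X P Act) c = c.
Proof. destruct c; reflexivity. Qed.

Definition idle : strategy L X P Act := fun _ => Infty _ _ _ _.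

Lemma idle_valid Ts : valid_strategy G Ts idle.
Proof. apply valid_strategyE; intros h y _; now apply valid_at_Infty. Qed.

End Strategies.

Section Runs.
Context {L X P Act : Type} (G : PTG L X P Act).

Definition induced_step (c0 c1 : Defs.choice L X P Act) (I1 I2 : Prop)
  (x0 x1 x2 : state L X P) : Prop :=
  match c0 with
  | Trans t => I2 /\ x1 = x0 /\ disc_step G t x0 x2
  | Delay _ _ _ _ d =>
      ((exists s, delay_step G d x0 s) ->
         I1 /\ delay_step G d x0 x1 /\
         match c1 with
         | Trans t => I2 /\ disc_step G t x1 x2
         | _ => ~ I2
         end) /\
      ((~ exists s, delay_step G d x0 s) -> ~ I1)
  | Infty _ _ _ _ => ~ I1
  end.

Definition induced_at (sg : strategy L X P Act) (r : run L X P) (i : nat) : Prop :=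
  induced_step (sg (prefix r i)) (sg (prefix r (S i))) (in_run r (S i)) (in_run r (S (S i)))
    (rst r i) (rst r (S i)) (rst r (S (S i))).

Lemma inducedE sg s0 r :
  induced G sg s0 r <-> in_run r 0 /\ rst r 0 = s0 /\
    forall i, Nat.even i = true -> in_run r i -> induced_at sg r i.
Proof. reflexivity. Qed.

Lemma induced_step_delay_equiv a b c1 c1' I1 I2 x0 x0' x1 x2 :
  induced_step (Delay _ _ _ _ a) c1 I1 I2 x0 x1 x2 ->
  (forall y, delay_step G a x0 y <-> delay_step G b x0' y) ->
  (I1 -> c1 = c1') ->
  induced_step (Delay _ _ _ _ b) c1' I1 I2 x0' x1 x2.
Proof.
  simpl; intros [Hp Hn] Hiff Hc; split.
  - intros [y Hy]; destruct (Hp (ex_intro _ y (proj2 (Hiff y) Hy))) as (H1 & Hd & Hm).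
    split; [exact H1|split; [exact (proj1 (Hiff _) Hd)|]]; rewrite <- (Hc H1); exact Hm.
  - intros Hn' H1; apply Hn; [|exact H1]; intros [y Hy]; apply Hn'.
    exists y; exact (proj1 (Hiff y) Hy).
Qed.

End Runs.

Definition run_from {L X P} (r : run L X P) (k : nat) (x0 : state L X P) : run L X P :=
  mkRun (option_map (fun n => (n - k)%nat) (rlen r))
        (fun j => match j with O => x0 | S j' => rst r (S j' + k) end).

Section RunFrom.
Context {L X P : Type}.
Implicit Types (r : run L X P).

Lemma in_run_from r k x0 j : in_run (run_from r k x0) j <-> in_run r (j + k).
Proof. unfold in_run, run_from; simpl; destruct (rlen r); simpl; [lia|tauto]. Qed.

Lemma in_run_le r i j : (i <= j)%nat -> in_run r j -> in_run r i.
Proof. unfold in_run; destruct (rlen r); [lia|auto]. Qed.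

Lemma prefix_run_from r k x0 j :
  prefix (run_from r k x0) j = x0 :: map (rst r) (seq (S k) j).
Proof.
  unfold prefix; simpl; f_equal.
  change (S k) with (S 0 + k)%nat; generalize 0%nat as a.
  induction j as [|j IH]; intros a; simpl; [reflexivity|].
  f_equal; apply (IH (S a)).
Qed.

Lemma prefix_add r k j :
  prefix r (j + k) = prefix r k ++ map (rst r) (seq (S k) j).
Proof.
  unfold prefix; replace (S (j + k)) with (S k + j)%nat by lia.
  rewrite seq_app, map_app; reflexivity.
Qed.

End RunFrom.

Section Suffixes.
Context {L X P Act : Type} (G : PTG L X P Act).
Implicit Types (r : run L X P) (sg : strategy L X P Act).

Lemma rst_run_from_self r k j : rst (run_from r k (rst r k)) j = rst r (j + k).
Proof. destruct j; reflexivity. Qed.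

Lemma induced_run_from sg sg' r k x0 :
  induced G sg (rst r 0) r -> Nat.even k = true -> in_run r k ->
  induced_at G sg' (run_from r k x0) 0 ->
  (in_run (run_from r k x0) 2 -> forall j, (2 <= j)%nat ->
     sg' (prefix (run_from r k x0) j) = sg (prefix r (j + k))) ->
  induced G sg' x0 (run_from r k x0).
Proof.
  intros Hind Hk Hk' H0 Hj; apply inducedE in Hind; destruct Hind as (_ & _ & Hc).
  apply inducedE; split; [apply in_run_from; exact Hk'|split; [reflexivity|]].
  intros i Hi Hin; destruct i as [|[|i]]; [exact H0|discriminate|].
  assert (H2 : in_run (run_from r k x0) 2) by exact (in_run_le _ 2 (S (S i)) ltac:(lia) Hin).
  assert (He : Nat.even (S (S i) + k) = true) by (rewrite Nat.even_add, Hi, Hk; reflexivity).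
  specialize (Hc _ He (proj1 (in_run_from _ _ _ _) Hin)); unfold induced_at in *.
  rewrite (Hj H2 (S (S i))), (Hj H2 (S (S (S i)))) by lia.
  rewrite (propositional_extensionality _ _ (in_run_from r k x0 (S (S (S i))))).
  rewrite (propositional_extensionality _ _ (in_run_from r k x0 (S (S (S (S i)))))).
  exact Hc.
Qed.

Lemma induced_suffix sg sg' r k :
  induced G sg (rst r 0) r -> Nat.even k = true -> in_run r k ->
  (forall j, sg' (prefix (run_from r k (rst r k)) j) = sg (prefix r (j + k))) ->
  induced G sg' (rst r k) (run_from r k (rst r k)).
Proof.
  intros Hind Hk Hk' Hj; apply inducedE in Hind; destruct Hind as (_ & _ & Hc).
  apply inducedE; split; [apply in_run_from; exact Hk'|split; [reflexivity|]].
  intros i Hi Hin.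
  assert (He : Nat.even (i + k) = true) by (rewrite Nat.even_add, Hi, Hk; reflexivity).
  specialize (Hc _ He (proj1 (in_run_from _ _ _ _) Hin)); unfold induced_at in *.
  rewrite (Hj i), (Hj (S i)), !rst_run_from_self.
  rewrite (propositional_extensionality _ _ (in_run_from r k (rst r k) (S i))).
  rewrite (propositional_extensionality _ _ (in_run_from r k (rst r k) (S (S i)))).
  exact Hc.
Qed.

Lemma winning_run_of_run_from Rg r k x0 :
  Nat.even k = true -> in_run r k ->
  (forall y, in_run (run_from r k x0) 1 -> cover_step G x0 (rst r (1 + k)) y ->
     cover_run G r y) ->
  (forall y, rlen r = Some (S k) -> cover_state G x0 y -> cover_run G r y) ->
  winning_run G Rg (run_from r k x0) -> winning_run G Rg r.
Proof.
  intros Hke Hk H0 H1 [y [Hc Hy]]; exists y; split; [|exact Hy].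
  destruct Hc as [(i & Hi & Hin & Hcs)|(m & Hm & Hcs)].
  - destruct i as [|[|i]]; [exact (H0 y Hin Hcs)|discriminate|].
    left; exists (S (S i) + k)%nat.
    split; [rewrite Nat.even_add, Hi, Hke; reflexivity|].
    split; [exact (proj1 (in_run_from _ _ _ _) Hin)|exact Hcs].
  - unfold run_from in Hm; simpl in Hm.
    destruct (rlen r) as [n|] eqn:En; [|discriminate].
    injection Hm as <-; unfold in_run in Hk; rewrite En in Hk.
    destruct (n - k - 1)%nat as [|j] eqn:Ej.
    + apply (H1 y); [f_equal; lia|exact Hcs].
    + right; exists n; split; [exact En|].
      replace (n - 1)%nat with (S j + k)%nat by lia; exact Hcs.
Qed.

End Suffixes.

Local Notation dec := excluded_middle_informative.

Definition relay_env {L X P Act} (a : state L X P) (p : list (state L X P))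
  (spec : Defs.choice L X P Act) (se : strategy L X P Act) : strategy L X P Act :=
  fun h => match h with
  | [] => Infty _ _ _ _
  | z :: rest => if dec (z = a) then
      match rest with [] => spec | z1 :: rest' => se (p ++ z1 :: rest') end
    else Infty _ _ _ _
  end.

Section Switching.
Context {L X P Act : Type} (G : PTG L X P Act) (Rg : L -> Prop).
Implicit Types (a : state L X P) (spec : Defs.choice L X P Act) (se : strategy L X P Act).

Lemma relay_env_head {a p spec se} : relay_env a p spec se [a] = spec.
Proof. unfold relay_env; destruct (dec (a = a)); [reflexivity|contradiction]. Qed.

Lemma relay_env_tail {a p spec se z1 rest} :
  relay_env a p spec se (a :: z1 :: rest) = se (p ++ z1 :: rest).
Proof. unfold relay_env; destruct (dec (a = a)); [reflexivity|contradiction]. Qed.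

Lemma relay_env_valid a p spec se :
  env_strategy G se ->
  (forall l, l <> [] -> history G (a :: l) -> history G (p ++ l)) ->
  valid_at G (Tu G) (relay_env a p spec se) [] a ->
  env_strategy G (relay_env a p spec se).
Proof.
  intros Hv Hh H0; apply valid_strategyE; intros h y Hy.
  destruct h as [|z h1].
  - destruct (dec (y = a)) as [->|E]; [exact H0|].
    apply valid_at_Infty; simpl; destruct (dec (y = a)); [contradiction|reflexivity].
  - destruct (dec (z = a)) as [->|E].
    2:{ apply valid_at_Infty; simpl; destruct (dec (z = a)); [contradiction|reflexivity]. }
    apply (valid_at_ext G (Tu G) _ se _ (p ++ h1)).
    + intros l; rewrite <- app_assoc; destruct h1; cbn [app]; apply relay_env_tail.
    + apply (proj1 (valid_strategyE _ _ _) Hv); rewrite <- app_assoc.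
      apply Hh; [destruct h1; discriminate|exact Hy].
Qed.

Definition wins_if_possible (w : state L X P) (sg : strategy L X P Act) : Prop :=
  ctrl_strategy G sg /\ (Win G Rg w -> winning_strategy_from G Rg sg w).

Definition win_strategy (w : state L X P) : strategy L X P Act :=
  epsilon (inhabits (@idle L X P Act)) (wins_if_possible w).

Lemma win_strategy_spec w : wins_if_possible w (win_strategy w).
Proof.
  unfold win_strategy; apply epsilon_spec; destruct (classic (Win G Rg w)) as [[_ [sc Hsc]]|Hw].
  - exists sc; split; [exact (proj1 Hsc)|intros; exact Hsc].
  - exists (@idle L X P Act); split; [apply idle_valid|intros; contradiction].
Qed.

Lemma winning_run_of_tail sc se r sg :
  env_strategy G se -> induced G (global_strategy sc se) (rst r 0) r -> in_run r 2 ->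
  history G [rst r 0; rst r 1; rst r 2] ->
  winning_strategy_from G Rg sg (rst r 2) ->
  (forall rest, sc (rst r 0 :: rst r 1 :: rst r 2 :: rest) = sg (rst r 2 :: rest)) ->
  winning_run G Rg r.
Proof.
  intros Hse Hind H2 Hh [_ Hsw] Hsc.
  set (p := [rst r 0; rst r 1; rst r 2]).
  set (se2 := relay_env (rst r 2) p (se p) se).
  assert (Hadh : adheres G sg (rst r 2) (run_from r 2 (rst r 2))).
  { exists se2; split.
    - apply relay_env_valid; [exact Hse| |].
      + intros l Hl Hal; destruct (history_three_inv _ _ _ _ Hh) as [[D HD] [t [Ht Hdt]]].
        exact (history_prepend_step _ _ _ _ _ D t Hal HD Ht Hdt).
      + apply (valid_at_ext G (Tu G) _ se _ [rst r 0; rst r 1]).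
        * intros [|z l]; cbn [app]; [apply relay_env_head|exact relay_env_tail].
        * exact (proj1 (valid_strategyE _ _ _) Hse [rst r 0; rst r 1] (rst r 2) Hh).
    - apply (induced_suffix G (global_strategy sc se)); [exact Hind|reflexivity|exact H2|].
      intros j; rewrite prefix_run_from, prefix_add; unfold global_strategy.
      cbn [prefix seq map app].
      rewrite Hsc; f_equal; unfold se2.
      destruct (map (rst r) (seq 3 j)); [apply relay_env_head|exact relay_env_tail]. }
  apply (winning_run_of_run_from G Rg r 2 (rst r 2)); [reflexivity|exact H2| | |].
  - intros y Hin Hc; left; exists 2%nat.
    split; [reflexivity|split; [exact (proj1 (in_run_from _ _ _ _) Hin)|exact Hc]].
  - intros y En Hc; right; exists 3%nat; split; [exact En|exact Hc].
  - exact (Hsw _ Hadh).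
Qed.

(* A run that starts with a delay through [s'] is, up to its first state, a run
   from [s']; its cover only grows by the states between [s] and [s']. *)
Lemma winning_run_of_delayed_start gs sg' se' r s s' d :
  induced G gs s r -> delay_step G d s s' -> env_strategy G se' ->
  winning_strategy_from G Rg sg' s' ->
  induced_at G (global_strategy sg' se') (run_from r 0 s') 0 ->
  (in_run r 2 -> forall j, (2 <= j)%nat ->
     global_strategy sg' se' (s' :: map (rst r) (seq 1 j)) = gs (s :: map (rst r) (seq 1 j))) ->
  winning_run G Rg r.
Proof.
  intros Hind Hd Hse [_ Hw] Hc0 Hj.
  pose proof (proj1 Hind) as Hin0; pose proof (proj1 (proj2 Hind)) as Hr0.
  rewrite <- Hr0 in Hind.
  assert (Hadh : adheres G sg' s' (run_from r 0 s')).
  { exists se'; split; [exact Hse|].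
    apply (induced_run_from G gs); [exact Hind|reflexivity|exact Hin0|exact Hc0|].
    intros H2 j Hj2; rewrite prefix_run_from, prefix_add; unfold prefix at 1; simpl.
    rewrite Hr0; apply Hj; [exact (proj1 (in_run_from _ _ _ _) H2)|exact Hj2]. }
  pose proof (proj1 (proj2 (proj2 (proj1 (delay_stepE _ _ _ _) Hd)))) as Hd0.
  apply (winning_run_of_run_from G Rg r 0 s'); [reflexivity|exact Hin0| | |exact (Hw _ Hadh)].
  - intros y Hin [D [HD [Hy [d' (Hd'0 & Hd'1 & Hd')]]]]; left; exists 0%nat.
    split; [reflexivity|split; [exact (proj1 (in_run_from _ _ _ _) Hin)|]].
    rewrite Hr0; exists (d + D); split; [exact (delay_step_trans _ _ _ _ _ _ Hd HD)|].
    split; [exact Hy|exists (d + d')].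
    split; [lra|split; [lra|exact (delay_step_trans _ _ _ _ _ _ Hd Hd')]].
  - intros y En [e He]; right; exists 1%nat; split; [exact En|]; simpl; rewrite Hr0.
    exists (d + e); exact (delay_step_trans _ _ _ _ _ _ Hd He).
Qed.

End Switching.

Section SafeDelay.
Context {L X P Act : Type} (G : PTG L X P Act) (Rg : L -> Prop).
Variables (s s' : state L X P) (d : R).
Hypothesis Hd : delay_step G d s s'.
Hypothesis Hsafe :
  forall s'', cover_delay G s d s'' -> ~ Uncontrollable G (Win G Rg) s''.

Lemma win_after_interrupt tu D x1 x2 :
  In tu (Tu G) -> delay_step G D s x1 -> D <= d -> disc_step G tu x1 x2 ->
  history G [s; x1; x2] /\ Win G Rg x2.
Proof.
  intros Htu HD HDd Hdisc; split.
  { exact (history_three G D _ _ _ tu HD (In_Tall_u G _ Htu) Hdisc). }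
  apply NNPP; intros Hn; apply (Hsafe x1 (cover_delay_of_step G s d D x1 HD HDd)).
  split; [exact (proj1 (proj2 HD))|exists tu, x2; auto].
Qed.

(* From [s] play [first], then [second] at the state reached by the first delay;
   after the first discrete step keep following [sg'] as if the run had started
   in [s'] when [passed] says that the first delay went through [s'], and switch to
   a winning strategy of the current state otherwise. *)
Definition strategy_via (first : Defs.choice L X P Act)
  (second : state L X P -> Defs.choice L X P Act) (passed : state L X P -> Prop)
  (sg' : strategy L X P Act) : strategy L X P Act :=
  fun h => match h with
  | [] => Infty _ _ _ _
  | x :: t => if dec (x = s) then
      match t with
      | [] => first
      | x1 :: [] => second x1
      | x1 :: z :: rest =>
          if dec (passed x1) then sg' (s' :: x1 :: z :: rest) else win_strategy G Rg z (z :: rest)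
      end else Infty _ _ _ _
  end.

Section Via.
Variables (first : Defs.choice L X P Act) (second : state L X P -> Defs.choice L X P Act)
  (passed : state L X P -> Prop) (sg' : strategy L X P Act).

Lemma strategy_via_1 : strategy_via first second passed sg' [s] = first.
Proof. unfold strategy_via; destruct (dec (s = s)); [reflexivity|contradiction]. Qed.

Lemma strategy_via_2 x1 : strategy_via first second passed sg' [s; x1] = second x1.
Proof. unfold strategy_via; destruct (dec (s = s)); [reflexivity|contradiction]. Qed.

Lemma strategy_via_follow x1 z rest :
  passed x1 ->
  strategy_via first second passed sg' (s :: x1 :: z :: rest) = sg' (s' :: x1 :: z :: rest).
Proof.
  intros B; unfold strategy_via; destruct (dec (s = s)); [|contradiction].
  destruct (dec (passed x1)); [reflexivity|contradiction].
Qed.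

Lemma strategy_via_switch x1 z rest :
  ~ passed x1 ->
  strategy_via first second passed sg' (s :: x1 :: z :: rest) = win_strategy G Rg z (z :: rest).
Proof.
  intros B; unfold strategy_via; destruct (dec (s = s)); [|contradiction].
  destruct (dec (passed x1)); [contradiction|reflexivity].
Qed.

Lemma strategy_via_valid :
  ctrl_strategy G sg' ->
  (forall x1, passed x1 -> exists δ, delay_step G δ s' x1) ->
  valid_at G (Tc G) (strategy_via first second passed sg') [] s ->
  (forall x1, history G [s; x1] ->
     valid_at G (Tc G) (strategy_via first second passed sg') [s] x1) ->
  ctrl_strategy G (strategy_via first second passed sg').
Proof.
  intros Hv Hpassed H0 H1; apply valid_strategyE; intros h y Hh.
  destruct h as [|x0 h]; [|destruct (dec (x0 = s)) as [->|E]].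
  - destruct (dec (y = s)) as [->|E]; [exact H0|].
    apply valid_at_Infty; simpl; destruct (dec (y = s)); [contradiction|reflexivity].
  - destruct h as [|x1 h1]; [exact (H1 y Hh)|].
    destruct (dec (passed x1)) as [B|B].
    + apply (valid_at_ext G (Tc G) _ sg' _ (s' :: x1 :: h1)).
      * intros l; destruct h1; cbn [app]; apply strategy_via_follow, B.
      * apply (proj1 (valid_strategyE _ _ _) Hv), (history_replace_head G s); trivial.
        -- exact (proj1 (proj2 Hd)).
        -- exact (Hpassed x1 B).
    + apply (valid_at_ext G (Tc G) _ (win_strategy G Rg (hd y h1)) _ h1).
      * intros l; destruct h1; cbn [app hd]; apply strategy_via_switch, B.
      * apply (proj1 (valid_strategyE _ _ _) (proj1 (win_strategy_spec G Rg _))).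
        exact (history_drop_step G _ _ _ Hh (fun E => app_cons_not_nil h1 [] y (eq_sym E))).
  - apply valid_at_Infty; simpl; destruct (dec (x0 = s)); [contradiction|reflexivity].
Qed.

Lemma winning_run_of_switch se r :
  env_strategy G se -> induced G (global_strategy (strategy_via first second passed sg') se) s r ->
  in_run r 2 -> ~ passed (rst r 1) -> history G [s; rst r 1; rst r 2] ->
  Win G Rg (rst r 2) -> winning_run G Rg r.
Proof.
  intros Hse Hind H2 HnB Hh Hw; pose proof (proj1 (proj2 Hind)) as Hr0.
  set (sc := strategy_via first second passed sg') in Hind.
  apply (winning_run_of_tail G Rg sc se r (win_strategy G Rg (rst r 2))); rewrite ?Hr0; trivial.
  - exact (proj2 (win_strategy_spec G Rg _) Hw).
  - intros rest; apply strategy_via_switch, HnB.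
Qed.

End Via.

Section FirstDelay.
Variables (sc se : strategy L X P Act) (r : run L X P).
Hypotheses (Hsc : ctrl_strategy G sc) (Hse : env_strategy G se)
  (Hind : induced G (global_strategy sc se) s r).

Lemma induced_at_start :
  induced_step G (global_choice (sc [s]) (se [s]))
    (global_choice (sc [s; rst r 1]) (se [s; rst r 1]))
    (in_run r 1) (in_run r 2) s (rst r 1) (rst r 2).
Proof.
  destruct Hind as (Hin0 & Hr0 & Hc); specialize (Hc 0%nat eq_refl Hin0).
  unfold induced_at, prefix in Hc; simpl in Hc; rewrite Hr0 in Hc; exact Hc.
Qed.

Lemma step_from_delayed_target t :
  sc [s; s'] = Trans t -> rst r 1 = s' ->
  match global_choice (sc [s; rst r 1]) (se [s; rst r 1]) with
  | Trans t0 => in_run r 2 /\ disc_step G t0 (rst r 1) (rst r 2)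
  | _ => ~ in_run r 2
  end ->
  in_run r 2 /\ history G [s; rst r 1; rst r 2] /\
  match global_choice (sc [s; s']) (se [s; s']) with
  | Trans t0 => disc_step G t0 s' (rst r 2) | _ => False end.
Proof.
  intros Et -> Hm; pose proof (history_two G d s s' Hd) as Hh2.
  destruct (se [s; s']) as [| |tu] eqn:Ee; rewrite Et in Hm |- *; simpl in Hm |- *;
    destruct Hm as [H2 Hdt]; (split; [exact H2|split; [|exact Hdt]]);
    eapply (history_three G d _ _ _ _ Hd); try eassumption.
  1,2: apply In_Tall_c; exact (proj1 (proj1 (proj1 (valid_strategyE _ _ _) Hsc [s] s' Hh2) t Et)).
  apply In_Tall_u; exact (proj1 (proj1 (proj1 (valid_strategyE _ _ _) Hse [s] s' Hh2) tu Ee)).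
Qed.

Lemma run_after_delay t :
  sc [s] = Delay _ _ _ _ d -> sc [s; s'] = Trans t ->
  in_run r 2 /\ history G [s; rst r 1; rst r 2] /\
  ((rst r 1 = s' /\ match global_choice (sc [s; s']) (se [s; s']) with
                   | Trans t0 => disc_step G t0 s' (rst r 2) | _ => False end) \/
   ((s <> s' -> rst r 1 <> s') /\ Win G Rg (rst r 2))).
Proof.
  intros E0 Et; pose proof induced_at_start as Hc; rewrite E0 in Hc.
  pose proof (proj1 (proj2 (proj2 (proj1 (delay_stepE _ _ _ _) Hd)))) as Hd0.
  destruct (proj1 (valid_strategyE _ _ _) Hse [] s (history_single G s (proj1 Hd))) as [LT LD].
  destruct (se [s]) as [δ| |tu] eqn:Es; simpl in Hc.
  - destruct (LD δ Es) as [Hδ0 Hδ].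
    assert (Hm0 : 0 <= Rmin d δ <= d) by (unfold Rmin; destruct (Rle_dec d δ); lra).
    destruct (proj1 Hc (ex_intro _ _ (delay_step_le G s s' _ d Hd Hm0))) as (H1 & HD & Hm).
    destruct (classic (rst r 1 = s')) as [Er1|Ner].
    + destruct (step_from_delayed_target t Et Er1 Hm) as (H2 & Hh & Hstep); auto.
    + assert (Hlt : δ < d).
      { destruct (Rlt_dec δ d) as [l|n]; [exact l|]; exfalso; apply Ner.
        rewrite Rmin_left in HD by lra; exact (delay_step_det _ _ _ _ _ HD Hd). }
      rewrite Rmin_right in HD by lra.
      destruct (Hδ _ HD) as [tu Etu]; cbn [app] in Etu; rewrite Etu in Hm; destruct Hm as [H2 Hdt].
      destruct (proj1 (proj1 (valid_strategyE _ _ _) Hse [s] _ (history_two G δ _ _ HD)) tu Etu)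
        as [Htu _].
      destruct (win_after_interrupt tu δ _ _ Htu HD ltac:(lra) Hdt); tauto.
  - destruct (proj1 Hc (ex_intro _ s' Hd)) as (H1 & HD & Hm).
    pose proof (delay_step_det _ _ _ _ _ HD Hd) as Er1.
    destruct (step_from_delayed_target t Et Er1 Hm); tauto.
  - destruct Hc as (H2 & Er1 & Hdt); destruct (LT tu Es) as [Htu _].
    rewrite <- Er1 in Hdt.
    assert (HD0 : delay_step G 0 s (rst r 1)) by (rewrite Er1; exact (delay_step_0 G s (proj1 Hd))).
    destruct (win_after_interrupt tu 0 _ _ Htu HD0 Hd0 Hdt) as [Hh Hw].
    split; [exact H2|split; [exact Hh|right; split; [rewrite Er1; exact (fun N => N)|exact Hw]]].
Qed.

End FirstDelay.

Lemma winning_run_through_target first second passed sg' se spec r :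
  winning_strategy_from G Rg sg' s' -> env_strategy G se ->
  induced G (global_strategy (strategy_via first second passed sg') se) s r ->
  (in_run r 2 -> passed (rst r 1)) ->
  valid_at G (Tu G) (relay_env s' [s] spec se) [] s' ->
  induced_at G (global_strategy sg' (relay_env s' [s] spec se)) (run_from r 0 s') 0 ->
  winning_run G Rg r.
Proof.
  intros Hwin Hse Hind Hpassed Hspec H0.
  apply (winning_run_of_delayed_start G Rg _ sg' (relay_env s' [s] spec se) r s s' d Hind Hd);
    trivial.
  - apply relay_env_valid; trivial.
    intros [|x1 l] Hl Hh; [contradiction|].
    apply (history_replace_head G s'); [exact Hh|exact (proj1 Hd)|].
    destruct Hh as (_ & _ & Hst).
    destruct (proj1 (Hst 0%nat s' x1 eq_refl eq_refl) eq_refl) as [δ Hδ].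
    exists (d + δ); exact (delay_step_trans _ _ _ _ _ _ Hd Hδ).
  - intros H2 [|[|j]] Hj; [lia|lia|]; cbn [seq map]; unfold global_strategy.
    rewrite strategy_via_follow, relay_env_tail by exact (Hpassed H2); reflexivity.
Qed.

Definition move_at_target (t : Tr L X P Act) (x1 : state L X P) : Defs.choice L X P Act :=
  if dec (x1 = s') then Trans t else Infty _ _ _ _.

Lemma delay_then_move_valid t passed sg' :
  ctrl_strategy G sg' ->
  (forall x1, passed x1 -> exists δ, delay_step G δ s' x1) ->
  In t (Tc G) /\ fst s' = tsrc t /\ sat (snd s') (tguard t) /\
    sat (vreset (snd s') (treset t)) (Inv G (tdst t)) ->
  ctrl_strategy G (strategy_via (Delay _ _ _ _ d) (move_at_target t) passed sg').
Proof.
  intros Hv Hpassed Ht; apply strategy_via_valid; trivial; split.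
  - intros t0 E; cbn [app] in E; rewrite strategy_via_1 in E; discriminate.
  - intros d0 E; cbn [app] in E; rewrite strategy_via_1 in E; injection E as <-.
    split; [exact (proj1 (proj2 (proj2 Hd)))|].
    intros y' Hy'; rewrite (delay_step_det _ _ _ _ _ Hy' Hd); cbn [app].
    rewrite strategy_via_2; unfold move_at_target.
    destruct (dec (s' = s')); [eexists; reflexivity|contradiction].
  - intros t0 E; cbn [app] in E; rewrite strategy_via_2 in E; unfold move_at_target in E.
    destruct (dec (x1 = s')) as [->|]; [injection E as <-; exact Ht|discriminate].
  - intros d0 E; cbn [app] in E; rewrite strategy_via_2 in E; unfold move_at_target in E.
    destruct (dec (x1 = s')); discriminate.
Qed.

Lemma win_of_winning_move t s3 :
  In t (Tc G) -> Win G Rg s3 -> disc_step G t s' s3 -> Win G Rg s.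
Proof.
  intros Ht Hw3 Hdisc; split; [exact (proj1 Hd)|].
  set (sc := strategy_via (Delay _ _ _ _ d) (move_at_target t) (fun _ => False) (@idle L X P Act)).
  assert (Hsc : ctrl_strategy G sc).
  { apply delay_then_move_valid; [apply idle_valid|intros _ []|].
    destruct Hdisc as (_ & Hs3 & Hsrc & Hdst & Hg & Hv).
    rewrite <- Hv, <- Hdst; exact (conj Ht (conj Hsrc (conj Hg (proj2 Hs3)))). }
  exists sc; split; [exact Hsc|intros r [se [Hse Hind]]].
  assert (Et : sc [s; s'] = Trans t).
  { unfold sc; rewrite strategy_via_2; unfold move_at_target.
    destruct (dec (s' = s')); [reflexivity|contradiction]. }
  destruct (run_after_delay sc se r Hsc Hse Hind t (strategy_via_1 _ _ _ _) Et)
    as (H2 & Hh & [[Er1 Hstep]|[_ Hw]]);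
    [|exact (winning_run_of_switch _ _ _ _ se r Hse Hind H2 (fun f => f) Hh Hw)].
  apply (winning_run_of_switch _ _ _ _ se r Hse Hind H2 (fun f => f) Hh).
  rewrite Et in Hstep; destruct (se [s; s']) as [| |tu] eqn:Ee; simpl in Hstep;
    try (rewrite (disc_step_det _ _ _ _ _ Hstep Hdisc); exact Hw3).
  destruct (proj1 (proj1 (valid_strategyE _ _ _) Hse [s] s' (history_two G d s s' Hd)) tu Ee)
    as [Htu _].
  exact (proj2 (win_after_interrupt tu d s' _ Htu Hd (Rle_refl d) Hstep)).
Qed.

Lemma win_of_winning_target_moving sg' t :
  s <> s' -> winning_strategy_from G Rg sg' s' -> sg' [s'] = Trans t -> Win G Rg s.
Proof.
  intros Ness Hwin Et; split; [exact (proj1 Hd)|].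
  set (passed := fun x1 : state L X P => x1 = s').
  set (sc := strategy_via (Delay _ _ _ _ d) (move_at_target t) passed sg').
  assert (Hsc : ctrl_strategy G sc).
  { apply delay_then_move_valid; [exact (proj1 Hwin)| |].
    - intros x1 ->; exists 0; exact (delay_step_0 G s' (proj1 (proj2 Hd))).
    - exact (proj1 (proj1 (valid_strategyE _ _ _) (proj1 Hwin) [] s'
                      (history_single G s' (proj1 (proj2 Hd)))) t Et). }
  exists sc; split; [exact Hsc|intros r [se [Hse Hind]]].
  assert (Et' : sc [s; s'] = Trans t).
  { unfold sc; rewrite strategy_via_2; unfold move_at_target.
    destruct (dec (s' = s')); [reflexivity|contradiction]. }
  destruct (run_after_delay sc se r Hsc Hse Hind t (strategy_via_1 _ _ _ _) Et')
    as (H2 & Hh & [[Er1 Hstep]|[Hr1 Hw]]).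
  - set (spec := match se [s; s'] with Trans tu => Trans tu | _ => Infty _ _ _ _ end).
    apply (winning_run_through_target _ _ _ sg' se spec r Hwin Hse Hind (fun _ => Er1)).
    + split.
      * intros tu E; cbn [app] in E; rewrite relay_env_head in E; unfold spec in E.
        destruct (se [s; s']) as [| |tu'] eqn:Ee; try discriminate; injection E as <-.
        exact (proj1 (proj1 (valid_strategyE _ _ _) Hse [s] s' (history_two G d s s' Hd)) _ Ee).
      * intros d0 E; cbn [app] in E; rewrite relay_env_head in E; unfold spec in E.
        destruct (se [s; s']); discriminate.
    + unfold induced_at; rewrite !prefix_run_from; cbn [seq map].
      unfold global_strategy; rewrite Et, relay_env_head; rewrite Et' in Hstep.
      rewrite (propositional_extensionality _ _ (in_run_from r 0 s' 2)).
      unfold spec; destruct (se [s; s']); simpl in Hstep |- *;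
        (split; [exact H2|split; [exact Er1|exact Hstep]]).
  - apply (winning_run_of_switch _ _ _ _ se r Hse Hind H2); trivial.
    exact (Hr1 Ness).
Qed.

Lemma delay_step_through_target a :
  0 <= a -> forall y, delay_step G (d + a) s y <-> delay_step G a s' y.
Proof.
  intros Ha y; split; intros Hy.
  - replace a with (d + a - d) by ring; apply (delay_step_sub G s s' y d); trivial; lra.
  - exact (delay_step_trans _ _ _ _ _ _ Hd Hy).
Qed.

Definition reaches_from_target (x1 : state L X P) : Prop := exists δ, delay_step G δ s' x1.

(* [s <> s'] forces clocks to exist, and then a delay is determined by the
   state it reaches. *)
Lemma delay_offset_of_target δ δ' y :
  s <> s' -> delay_step G δ s y -> delay_step G δ' s' y -> δ = d + δ'.
Proof.
  intros Ness; rewrite !delay_stepE; destruct (proj1 (delay_stepE _ _ _ _) Hd) as (_&_&_&Es').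
  intros (_&_&_&->) (_&_&_&E); rewrite Es', delayed_add in E.
  destruct (delayed_eq_cases _ _ _ E) as [Eδ|Hall]; [exact Eδ|].
  exfalso; apply Ness; rewrite Es', (Hall d 0), delayed_0; reflexivity.
Qed.

Section WaitingTarget.
Variable sg' : strategy L X P Act.
Hypotheses (Hwin : winning_strategy_from G Rg sg' s')
  (Hnot_move : forall t, sg' [s'] <> Trans t).

Definition delay_further (c : Defs.choice L X P Act) : Defs.choice L X P Act :=
  match c with Delay _ _ _ _ e => Delay _ _ _ _ (d + e) | _ => c end.

Definition follow_from_target (x1 : state L X P) : Defs.choice L X P Act :=
  if dec (reaches_from_target x1) then sg' [s'; x1] else Infty _ _ _ _.

Definition delay_through : strategy L X P Act :=
  strategy_via (delay_further (sg' [s'])) follow_from_target reaches_from_target sg'.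

Lemma target_delay_nonneg e : sg' [s'] = Delay _ _ _ _ e -> 0 <= e.
Proof.
  intros Ee; exact (proj1 (proj2 (proj1 (valid_strategyE _ _ _) (proj1 Hwin) []
    s' (history_single G s' (proj1 (proj2 Hd)))) e Ee)).
Qed.

Lemma target_choice_cases :
  (exists e, sg' [s'] = Delay _ _ _ _ e /\ 0 <= e) \/ sg' [s'] = Infty _ _ _ _.
Proof.
  destruct (sg' [s']) as [e| |t] eqn:Ee; [left|right|]; trivial.
  - exists e; split; [reflexivity|exact (target_delay_nonneg e Ee)].
  - exfalso; exact (Hnot_move t eq_refl).
Qed.

Lemma delay_through_valid : ctrl_strategy G delay_through.
Proof.
  pose proof (proj1 Hwin) as Hv.
  apply strategy_via_valid; trivial; [split|intros x1 Hh].
  - intros t0 E; cbn [app] in E; rewrite strategy_via_1 in E.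
    destruct target_choice_cases as [(e & Ee & _)|Ei]; rewrite ?Ee, ?Ei in E; discriminate.
  - intros d0 E; cbn [app] in E; rewrite strategy_via_1 in E.
    destruct target_choice_cases as [(e & Ee & _)|Ei]; rewrite ?Ee, ?Ei in E; try discriminate.
    injection E as <-.
    destruct (proj1 (valid_strategyE _ _ _) Hv [] s' (history_single G s' (proj1 (proj2 Hd))))
      as [_ VD]; destruct (VD e Ee) as [He0 He].
    split; [pose proof (proj1 (proj2 (proj2 Hd))); lra|intros y' Hy'].
    apply (delay_step_through_target e He0) in Hy'.
    cbn [app]; rewrite strategy_via_2; unfold follow_from_target.
    destruct (dec (reaches_from_target y')) as [_|C]; [exact (He y' Hy')|].
    exfalso; apply C; exists e; exact Hy'.
  - destruct (dec (reaches_from_target x1)) as [[δ Hδ]|B].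
    + apply (valid_at_ext G (Tc G) _ sg' _ [s']).
      * intros [|z l]; cbn [app]; [rewrite strategy_via_2; unfold follow_from_target|].
        -- destruct (dec (reaches_from_target x1)) as [_|C]; [reflexivity|].
           exfalso; apply C; exists δ; exact Hδ.
        -- apply strategy_via_follow; exists δ; exact Hδ.
      * exact (proj1 (valid_strategyE _ _ _) Hv [s'] x1 (history_two G δ _ _ Hδ)).
    + apply valid_at_Infty; cbn [app]; rewrite strategy_via_2; unfold follow_from_target.
      destruct (dec (reaches_from_target x1)); [contradiction|reflexivity].
Qed.

Section Runs.
Variables (se : strategy L X P Act) (r : run L X P).
Hypotheses (Hse : env_strategy G se)
  (Hind : induced G (global_strategy delay_through se) s r).

Lemma first_step_delay_through :
  induced_step G (global_choice (delay_further (sg' [s'])) (se [s]))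
    (global_choice (follow_from_target (rst r 1)) (se [s; rst r 1]))
    (in_run r 1) (in_run r 2) s (rst r 1) (rst r 2).
Proof.
  pose proof (induced_at_start delay_through se r Hind) as Hc.
  unfold delay_through in Hc; rewrite strategy_via_1, strategy_via_2 in Hc; exact Hc.
Qed.

Lemma delay_through_interrupted :
  in_run r 1 -> ~ reaches_from_target (rst r 1) ->
  in_run r 2 /\ history G [s; rst r 1; rst r 2] /\ Win G Rg (rst r 2).
Proof.
  intros H1 HnB; pose proof first_step_delay_through as Hc.
  destruct (proj1 (valid_strategyE _ _ _) Hse [] s (history_single G s (proj1 Hd))) as [LT LD].
  assert (Hd0 : 0 <= d) by exact (proj1 (proj2 (proj2 Hd))).
  assert (Hfar : forall D, delay_step G D s (rst r 1) -> d <= D -> False).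
  { intros D HD HdD; apply HnB; exists (D - d); exact (delay_step_sub G s s' _ d D Hd HD HdD). }
  unfold follow_from_target in Hc.
  destruct (dec (reaches_from_target (rst r 1))) as [|_]; [contradiction|].
  rewrite global_choice_Infty_l in Hc.
  destruct (se [s]) as [δ| |tu] eqn:Es.
  - destruct (LD δ Es) as [Hδ0 Hδ].
    assert (HcD : exists D, (d <= δ -> d <= D) /\ (δ < d -> D = δ) /\
      induced_step G (Delay _ _ _ _ D) (se [s; rst r 1]) (in_run r 1) (in_run r 2)
        s (rst r 1) (rst r 2)).
    { destruct target_choice_cases as [(e & Ee & He0)|Ei]; rewrite ?Ee, ?Ei in Hc; simpl in Hc;
        [|exists δ; auto].
      exists (Rmin (d + e) δ).
      split; [|split; [intros; apply Rmin_right; lra|exact Hc]].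
      intros; unfold Rmin; destruct Rle_dec; lra. }
    destruct HcD as (D & HD1 & HD2 & [Hp Hnp]).
    destruct (classic (exists y, delay_step G D s y)) as [Hp'|Hnp'];
      [|exfalso; exact (Hnp Hnp' H1)].
    destruct (Hp Hp') as (_ & HD & Hm).
    assert (Hlt : δ < d)
      by (destruct (Rlt_dec δ d); [assumption|exfalso; apply (Hfar D HD), HD1; lra]).
    rewrite (HD2 Hlt) in HD; destruct (Hδ _ HD) as [tu Etu]; cbn [app] in Etu.
    rewrite Etu in Hm; destruct Hm as [H2 Hdt].
    destruct (proj1 (proj1 (valid_strategyE _ _ _) Hse [s] _ (history_two G δ _ _ HD)) tu Etu)
      as [Htu _].
    destruct (win_after_interrupt tu δ _ _ Htu HD ltac:(lra) Hdt); tauto.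
  - exfalso; destruct target_choice_cases as [(e & Ee & He0)|Ei]; rewrite ?Ee, ?Ei in Hc;
      simpl in Hc; [|exact (Hc H1)].
    destruct Hc as [Hp Hnp].
    destruct (classic (exists y, delay_step G (d + e) s y)) as [Hp'|Hnp']; [|exact (Hnp Hnp' H1)].
    destruct (Hp Hp') as (_ & HD & _); exact (Hfar _ HD ltac:(lra)).
  - destruct (LT tu Es) as [Htu _].
    destruct (delay_further (sg' [s'])); destruct Hc as (H2 & Er1 & Hdt); rewrite <- Er1 in Hdt;
      assert (HD0 : delay_step G 0 s (rst r 1))
        by (rewrite Er1; exact (delay_step_0 G s (proj1 Hd)));
      destruct (win_after_interrupt tu 0 _ _ Htu HD0 Hd0 Hdt); tauto.
Qed.

Hypothesis Ness : s <> s'.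

(* The environment's first move from [s], seen from [s']. *)
Definition env_from_target : Defs.choice L X P Act :=
  match se [s] with
  | Delay _ _ _ _ δ => if Rle_dec d δ then Delay _ _ _ _ (δ - d) else Infty _ _ _ _
  | _ => Infty _ _ _ _
  end.

Lemma env_from_target_valid :
  valid_at G (Tu G) (relay_env s' [s] env_from_target se) [] s'.
Proof.
  split; intros c E; cbn [app] in E; rewrite relay_env_head in E; unfold env_from_target in E;
    destruct (se [s]) as [δ| |tu] eqn:Es; try discriminate;
    destruct (Rle_dec d δ) as [Hle|]; try discriminate; injection E as <-.
  split; [lra|intros y' Hy'].
  apply (delay_step_through_target (δ - d) ltac:(lra)) in Hy'.
  replace (d + (δ - d)) with δ in Hy' by ring.
  destruct (proj1 (valid_strategyE _ _ _) Hse [] s (history_single G s (proj1 Hd))) as [_ LD].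
  destruct (proj2 (LD δ Es) y' Hy') as [t Et].
  exists t; cbn [app]; rewrite relay_env_tail; exact Et.
Qed.

Lemma env_first_delay_ge δ :
  (in_run r 1 -> reaches_from_target (rst r 1)) -> se [s] = Delay _ _ _ _ δ -> d <= δ.
Proof.
  intros HA Es; pose proof first_step_delay_through as Hc; rewrite Es in Hc.
  destruct (Rle_dec d δ) as [Hle|Hlt]; [exact Hle|exfalso].
  destruct (proj1 (valid_strategyE _ _ _) Hse [] s (history_single G s (proj1 Hd))) as [_ LD].
  assert (Hδ0 : 0 <= δ) by exact (proj1 (LD δ Es)).
  assert (Hcδ : induced_step G (Delay _ _ _ _ δ)
    (global_choice (follow_from_target (rst r 1)) (se [s; rst r 1]))
    (in_run r 1) (in_run r 2) s (rst r 1) (rst r 2)).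
  { destruct target_choice_cases as [(e & Ee & He0)|Ei]; rewrite ?Ee, ?Ei in Hc; simpl in Hc;
      [rewrite Rmin_right in Hc by lra|]; exact Hc. }
  destruct (proj1 Hcδ (ex_intro _ _ (delay_step_le G s s' δ d Hd ltac:(lra)))) as (H1 & HD & _).
  destruct (HA H1) as [δ' Hδ'].
  pose proof (delay_offset_of_target δ δ' _ Ness HD Hδ').
  pose proof (proj1 (proj2 (proj2 Hδ'))); lra.
Qed.

Lemma first_step_from_target :
  (in_run r 1 -> reaches_from_target (rst r 1)) ->
  induced_at G (global_strategy sg' (relay_env s' [s] env_from_target se)) (run_from r 0 s') 0.
Proof.
  intros HA; pose proof first_step_delay_through as Hc.
  assert (Hequiv : forall b, 0 <= b -> forall y, delay_step G (d + b) s y <-> delay_step G b s' y)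
    by exact delay_step_through_target.
  assert (Hfollow : in_run r 1 -> global_choice (follow_from_target (rst r 1)) (se [s; rst r 1]) =
    global_choice (sg' [s'; rst r 1]) (se [s; rst r 1])).
  { intros H1; unfold follow_from_target.
    destruct (dec (reaches_from_target (rst r 1))); [reflexivity|exfalso; auto]. }
  assert (Hd0 : 0 <= d) by exact (proj1 (proj2 (proj2 Hd))).
  unfold induced_at; rewrite !prefix_run_from; cbn [seq map]; unfold global_strategy.
  rewrite relay_env_head, relay_env_tail; cbn [app].
  rewrite (propositional_extensionality _ _ (in_run_from r 0 s' 1)).
  rewrite (propositional_extensionality _ _ (in_run_from r 0 s' 2)).
  cbn [rst run_from Nat.add]; unfold env_from_target.
  destruct (se [s]) as [δ| |tu] eqn:Es.
  - destruct (Rle_dec d δ) as [Hle|Hlt].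
    + destruct target_choice_cases as [(e & Ee & He0)|Ei]; rewrite ?Ee, ?Ei in Hc |- *;
        simpl in Hc |- *; eapply induced_step_delay_equiv; try exact Hc; try exact Hfollow.
      * replace (Rmin (d + e) δ) with (d + Rmin e (δ - d))
          by (unfold Rmin; repeat destruct Rle_dec; lra).
        apply Hequiv; unfold Rmin; destruct Rle_dec; lra.
      * intros y; rewrite <- (Hequiv (δ - d)) by lra.
        replace (d + (δ - d)) with δ by ring; reflexivity.
    + exfalso; pose proof (env_first_delay_ge δ HA Es); lra.
  - destruct target_choice_cases as [(e & Ee & He0)|Ei]; rewrite ?Ee, ?Ei in Hc |- *;
      simpl in Hc |- *; [|exact Hc].
    exact (induced_step_delay_equiv G _ _ _ _ _ _ _ _ _ _ Hc (Hequiv e He0) Hfollow).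
  - exfalso; destruct (delay_further (sg' [s'])); destruct Hc as (H2 & Er1 & _);
      destruct (HA (in_run_le r 1 2 ltac:(lia) H2)) as [δ' Hδ']; rewrite Er1 in Hδ';
      pose proof (delay_offset_of_target 0 δ' s Ness (delay_step_0 G s (proj1 Hd)) Hδ');
      pose proof (proj1 (proj2 (proj2 Hδ')));
      apply Ness; destruct (proj1 (delay_stepE _ _ _ _) Hd) as (_ & _ & _ & ->);
      replace d with 0 by lra; symmetry; apply delayed_0.
Qed.

End Runs.

Lemma win_of_winning_target_waiting : s <> s' -> Win G Rg s.
Proof.
  intros Ness; split; [exact (proj1 Hd)|exists delay_through].
  split; [exact delay_through_valid|intros r [se [Hse Hind]]].
  destruct (classic (in_run r 1 /\ ~ reaches_from_target (rst r 1))) as [[H1 HnB]|HA].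
  - destruct (delay_through_interrupted se r Hse Hind H1 HnB) as (H2 & Hh & Hw).
    exact (winning_run_of_switch _ _ _ _ se r Hse Hind H2 HnB Hh Hw).
  - assert (HA' : in_run r 1 -> reaches_from_target (rst r 1))
      by (intros H1; apply NNPP; intros C; exact (HA (conj H1 C))).
    apply (winning_run_through_target _ _ _ sg' se (env_from_target se) r Hwin Hse Hind).
    + intros H2; exact (HA' (in_run_le r 1 2 ltac:(lia) H2)).
    + apply env_from_target_valid; assumption.
    + apply first_step_from_target; assumption.
Qed.

End WaitingTarget.
End SafeDelay.

Theorem lemmaA1 (L X P Act : Type) (G : PTG L X P Act) (Rg : L -> Prop) :
  forall s : state L X P,
    SafePred G (fun s' => Win G Rg s' \/ WinningMoves G (Win G Rg) s')
               (Uncontrollable G (Win G Rg)) s ->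
    Win G Rg s.
Proof.
  intros s [_ [s' [d [Htarget [Hd Hsafe]]]]].
  destruct Htarget as [Hw|[_ [t [s3 [Ht [Hw3 Hdisc]]]]]].
  - destruct (classic (s = s')) as [->|Ness]; [exact Hw|].
    destruct Hw as [_ [sg' Hwin]].
    destruct (classic (exists t, sg' [s'] = Trans t)) as [[t Et]|Hwait].
    + exact (win_of_winning_target_moving G Rg s s' d Hd Hsafe sg' t Ness Hwin Et).
    + apply (win_of_winning_target_waiting G Rg s s' d Hd Hsafe sg' Hwin); [|exact Ness].
      intros t Et; exact (Hwait (ex_intro _ t Et)).
  - exact (win_of_winning_move G Rg s s' d Hd Hsafe t s3 Ht Hw3 Hdisc).
Qed.
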